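(* Let $P$ and $P'$ be strictly convex closed polyhedra in $\mathbb{R}^3$ with the same combinatorial structure (with a fixed combinatorial equivalence), such that corresponding faces are affine-equivalent. Suppose there is an edge path $\gamma$ on $P$ such that (i) each vertex of $\gamma$ is incident to exactly three edges of $P$, and (ii) every face of $P$ is incident to at least one vertex of $\gamma$. Then $P$ and $P'$ are affine-equivalent.
   Context: A polyhedron is a connected two-dimensional polyhedral surface in $\mathbb{R}^3$ composed of finitely many convex polygons (its faces). A closed convex polyhedron is strictly convex if none of its dihedral angles equals $\pi$. Two polyhedra have the same combinatorial structure (are combinatorially equivalent) if there is an incidence-preserving bijection between their vertices, edges and faces. Two corresponding polygons (resp. polyhedra) are affine-equivalent if there is a nondegenerate affine map carrying the first onto the second and carrying each vertex, edge (and face) to the corresponding one under the fixed correspondence. An edge path is a sequence of vertices in which consecutive vertices are joined by edges of $P$. *)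

From HB Require Import structures.
From mathcomp Require Import all_boot all_order all_algebra.
From mathcomp Require Import reals.
Set Implicit Arguments. Unset Strict Implicit. Unset Printing Implicit Defensive.
Import Order.TTheory GRing.Theory Num.Theory.
Local Open Scope ring_scope.

Section Polyhedra.
Variable R : realType.
Variable V : finType.
(* A polyhedron is given by its (finitely many) vertices, indexed by V. *)
Variable p : V -> 'rV[R]_3.

Definition dotv (u w : 'rV[R]_3) : R := \sum_(k < 3) u 0 k * w 0 k.

(* S is the vertex set of a face (of some dimension) of the convex hull:
   the set of vertices lying on a supporting plane. *)
Definition face_set (S : {set V}) : Prop :=
  exists (a : 'rV[R]_3) (c : R), a != 0 /\
    (forall i, dotv (p i) a <= c) /\ S = [set i | dotv (p i) a == c].

Definition is_face (S : {set V}) : Prop :=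
  face_set S /\ exists i j k, [/\ i \in S, j \in S, k \in S &
     \rank (col_mx (p j - p i) (p k - p i)) = 2%N].

Definition is_edge (S : {set V}) : Prop := face_set S /\ #|S| = 2%N.

(* p are the vertices of a strictly convex closed polyhedron: the boundary of a
   3-dimensional convex polytope whose vertices (extreme points) are exactly the
   p i, decomposed into its facets (so no dihedral angle equals pi). *)
Definition strictly_convex_polyhedron : Prop :=
  [/\ injective p,
      (forall i, face_set [set i]) &
      exists i j k l, \rank (col_mx (p j - p i) (col_mx (p k - p i) (p l - p i))) = 3%N].

Definition degree3 (i : V) : Prop :=
  exists j1 j2 j3, [/\ j1 != j2, j1 != j3, j2 != j3 &
    forall j, is_edge [set i; j] <-> (j = j1 \/ j = j2 \/ j = j3)].

Fixpoint edge_path (x : V) (s : seq V) : Prop :=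
  match s with
  | [::] => True
  | y :: s' => is_edge [set x; y] /\ edge_path y s'
  end.

End Polyhedra.

Definition affine_on (R : realType) (V V' : finType) (p : V -> 'rV[R]_3)
  (q : V' -> 'rV[R]_3) (f : V -> V') (S : {set V}) : Prop :=
  exists (M : 'M[R]_3) (b : 'rV[R]_3),
    M \in unitmx /\ forall i, i \in S -> q (f i) = p i *m M + b.

Definition comb_equiv (R : realType) (V V' : finType) (p : V -> 'rV[R]_3)
  (q : V' -> 'rV[R]_3) (f : V -> V') : Prop :=
  [/\ bijective f,
      (forall S, is_face p S <-> is_face q (f @: S)) &
      (forall S, is_edge p S <-> is_edge q (f @: S))].

From mathcomp Require Import all_boot all_order all_algebra.
From mathcomp Require Import reals ring lra.

Set Implicit Arguments.
Unset Strict Implicit.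
Unset Printing Implicit Defensive.
Import Order.TTheory GRing.Theory Num.Theory.
Local Open Scope ring_scope.

(* At a vertex x of degree three with neighbours a, b, c, the vectors
   p a - p x, p b - p x, p c - p x are independent and every face through x
   contains two of them, because the edge cone at x is the cone they span.  Hence
   the affine map sending x, a, b, c to their images agrees with the given affine
   map of every face through x.  For an edge x x' of the path, the two faces at x
   through x' contain x, a, b, c, so the maps built at x and at x' coincide.
   Since every face meets the path and every vertex lies on a face, this single
   map sends every vertex to its image; it is invertible because the image
   polyhedron spans space. *)

Section Coordinates.
Variable R : realType.
Local Notation vec := 'rV[R]_3.
Implicit Types u v : vec.

Lemma row3P u v : u 0 0 = v 0 0 -> u 0 1 = v 0 1 -> u 0 2 = v 0 2 -> u = v.
Proof.
move=> e0 e1 e2; apply/rowP => -[[|[|[|k]]] lt_k3] //.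
- by rewrite (_ : Ordinal lt_k3 = 0) //; apply: val_inj.
- by rewrite (_ : Ordinal lt_k3 = 1) //; apply: val_inj.
- by rewrite (_ : Ordinal lt_k3 = 2) //; apply: val_inj.
Qed.

Lemma dotvE u v : dotv u v = u 0 0 * v 0 0 + u 0 1 * v 0 1 + u 0 2 * v 0 2.
Proof.
rewrite /dotv !big_ord_recr big_ord0 /= add0r.
have -> : widen_ord (leqnSn 2) (widen_ord (leqnSn 1) ord_max) = 0 by apply: val_inj.
have -> : widen_ord (leqnSn 2) ord_max = 1 by apply: val_inj.
by have -> : ord_max = 2 :> 'I_3 by apply: val_inj.
Qed.

Definition cross_def u v : vec :=
  \row_(k < 3) (if val k == 0%N then u 0 1 * v 0 2 - u 0 2 * v 0 1
                else if val k == 1%N then u 0 2 * v 0 0 - u 0 0 * v 0 2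
                else u 0 0 * v 0 1 - u 0 1 * v 0 0).
Fact cross_key : unit. Proof. exact: tt. Qed.
Definition cross := locked_with cross_key cross_def.

Lemma cross_x u v : cross u v 0 0 = u 0 1 * v 0 2 - u 0 2 * v 0 1.
Proof. by rewrite [cross]unlock mxE. Qed.
Lemma cross_y u v : cross u v 0 1 = u 0 2 * v 0 0 - u 0 0 * v 0 2.
Proof. by rewrite [cross]unlock mxE. Qed.
Lemma cross_z u v : cross u v 0 2 = u 0 0 * v 0 1 - u 0 1 * v 0 0.
Proof. by rewrite [cross]unlock mxE. Qed.

End Coordinates.

Ltac coords := rewrite ?dotvE ?mxE ?cross_x ?cross_y ?cross_z ?mxE
                       ?cross_x ?cross_y ?cross_z; ring.

Section VectorAlgebra.
Variable R : realType.
Local Notation vec := 'rV[R]_3.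
Implicit Types (u v w a b c : vec) (k : R).

Lemma dotvC u v : dotv u v = dotv v u. Proof. coords. Qed.
Lemma dotvDl u v w : dotv (u + v) w = dotv u w + dotv v w. Proof. coords. Qed.
Lemma dotvDr u v w : dotv w (u + v) = dotv w u + dotv w v. Proof. coords. Qed.
Lemma dotvBl u v w : dotv (u - v) w = dotv u w - dotv v w. Proof. coords. Qed.
Lemma dotvNl u v : dotv (- u) v = - dotv u v. Proof. coords. Qed.
Lemma dotvNr u v : dotv u (- v) = - dotv u v. Proof. coords. Qed.
Lemma dotvZl k u v : dotv (k *: u) v = k * dotv u v. Proof. coords. Qed.
Lemma dotvZr k u v : dotv u (k *: v) = k * dotv u v. Proof. coords. Qed.
Lemma dotv0l u : dotv 0 u = 0. Proof. coords. Qed.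
Lemma dotv0r u : dotv u 0 = 0. Proof. coords. Qed.

Lemma dotvv_ge0 u : 0 <= dotv u u.
Proof. rewrite dotvE; nra. Qed.

Lemma dotvv_eq0 u : (dotv u u == 0) = (u == 0).
Proof.
apply/eqP/eqP => [|->]; last exact: dotv0l.
rewrite dotvE => uu0; apply: row3P; rewrite mxE; nra.
Qed.

Lemma dotvv_gt0 u : (0 < dotv u u) = (u != 0).
Proof. by rewrite lt_def dotvv_eq0 dotvv_ge0 andbT. Qed.

Lemma dotv_crossl u v : dotv (cross u v) u = 0. Proof. coords. Qed.
Lemma dotv_crossr u v : dotv (cross u v) v = 0. Proof. coords. Qed.
Lemma cross0l u : cross 0 u = 0. Proof. by apply: row3P; coords. Qed.

Lemma cross_crossl a b c : cross (cross a b) c = dotv a c *: b - dotv b c *: a.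
Proof. by apply: row3P; coords. Qed.

Lemma cross0_collinear a b : a != 0 -> cross a b = 0 -> b = (dotv a b / dotv a a) *: a.
Proof.
move=> a_neq0 ab0; have := cross_crossl a b a; rewrite ab0 cross0l => /esym/eqP.
rewrite subr_eq0 (dotvC b) => /eqP e.
by rewrite mulrC -scalerA -e scalerA mulVf ?scale1r // dotvv_eq0.
Qed.

Definition det3 a b c := dotv a (cross b c).

Lemma det3_cyc a b c : det3 b c a = det3 a b c. Proof. rewrite /det3; coords. Qed.
Lemma det3_swap a b c : det3 a c b = - det3 a b c. Proof. rewrite /det3; coords. Qed.
Lemma dotv_cross_det3 a b c : dotv (cross a b) c = det3 a b c.
Proof. rewrite /det3; coords. Qed.

Lemma cramer a b c w :
  det3 a b c *: w = det3 w b c *: a + det3 a w c *: b + det3 a b w *: c.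
Proof. by apply: row3P; rewrite /det3; coords. Qed.

Lemma cramer_coord a b c w : det3 a b c != 0 ->
  w = (det3 w b c / det3 a b c) *: a + (det3 a w c / det3 a b c) *: b
      + (det3 a b w / det3 a b c) *: c.
Proof.
move=> D_neq0; apply: (scalerI D_neq0).
by rewrite cramer !scalerDr !scalerA !(mulrC (det3 a b c)) !divfK.
Qed.

Lemma det3_same_side a b c n w : det3 a b c != 0 -> n != 0 ->
  dotv b n = 0 -> dotv c n = 0 -> dotv a n <= 0 -> dotv w n <= 0 ->
  0 <= det3 w b c * det3 a b c.
Proof.
move=> D_neq0 n_neq0 bn cn an_le0 wn_le0.
have cr z : det3 a b c * dotv z n = det3 z b c * dotv a n.
  have := congr1 (fun v => dotv v n) (cramer a b c z).
  by rewrite /= !dotvDl !dotvZl bn cn !mulr0 !addr0.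
have an_lt0 : dotv a n < 0.
  rewrite lt_neqAle an_le0 andbT; apply: contra_neq D_neq0 => an0.
  apply/eqP; have := cr n; rewrite an0 mulr0 => /eqP.
  by rewrite mulf_eq0 dotvv_eq0 (negbTE n_neq0) orbF.
have := cr w; have := sqr_ge0 (det3 a b c); nra.
Qed.

Lemma cone_face_collinear a b c n w : det3 a b c != 0 ->
  0 <= det3 w b c * det3 a b c -> 0 <= det3 a w c * det3 a b c ->
  0 <= det3 a b w * det3 a b c ->
  dotv a n <= 0 -> dotv b n < 0 -> dotv c n < 0 -> dotv w n = 0 ->
  w = (det3 w b c / det3 a b c) *: a.
Proof.
set D := det3 a b c => D_neq0 A_ge0 B_ge0 C_ge0 an bn cn wn.
have := congr1 (fun v => dotv v n) (cramer a b c w).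
rewrite /= !dotvDl !dotvZl wn mulr0 => e.
have {}e : det3 w b c * D * dotv a n + det3 a w c * D * dotv b n
           + det3 a b w * D * dotv c n = 0.
  by rewrite -[RHS](mul0r D) e; ring.
have := mulr_ge0_le0 A_ge0 an; have := mulr_ge0_le0 B_ge0 (ltW bn).
have := mulr_ge0_le0 C_ge0 (ltW cn) => tc tb ta.
have B0 : det3 a w c = 0.
  have /eqP : det3 a w c * D * dotv b n = 0 by lra.
  by rewrite !mulf_eq0 (negbTE D_neq0) (negbTE (ltr0_neq0 bn)) !orbF => /eqP.
have C0 : det3 a b w = 0.
  have /eqP : det3 a b w * D * dotv c n = 0 by lra.
  by rewrite !mulf_eq0 (negbTE D_neq0) (negbTE (ltr0_neq0 cn)) !orbF => /eqP.
by rewrite {1}(cramer_coord w D_neq0) B0 C0 !mul0r !scale0r !addr0.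
Qed.

Lemma orthogonal_neq0 a : a != 0 -> exists2 u : vec, u != 0 & dotv a u = 0.
Proof.
move=> a_neq0; pose e (i : 'I_3) : vec := delta_mx 0 i.
have [ax0|] := eqVneq (cross a (e 0)) 0;
  last by exists (cross a (e 0)); rewrite // dotvC dotv_crossl.
have [ay0|] := eqVneq (cross a (e 1)) 0;
  last by exists (cross a (e 1)); rewrite // dotvC dotv_crossl.
have := congr1 (fun w => w 0 1) ax0; have := congr1 (fun w => w 0 2) ax0.
have := congr1 (fun w => w 0 2) ay0.
rewrite /= !(cross_x, cross_y, cross_z) !mxE /= => a0 a1 a2.
by move/eqP: a_neq0; case; apply: row3P; rewrite mxE; lra.
Qed.

Lemma dotv_mulmx_tr u v : u *m v^T = (dotv u v)%:M.
Proof.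
apply/matrixP => i j; rewrite !ord1 !mxE /= mulr1n /dotv.
by apply: eq_bigr => k _; rewrite !mxE.
Qed.

Lemma rank_cross_neq0 u v : cross u v != 0 -> \rank (col_mx u v) = 2%N.
Proof.
set n := cross u v => n_neq0; have nn_neq0 : dotv n n != 0 by rewrite dotvv_eq0.
suff : row_free (col_mx u v) by move/eqP.
apply/row_freeP.
exists (row_mx ((dotv n n)^-1 *: cross v n)^T ((dotv n n)^-1 *: cross n u)^T).
rewrite mul_col_row !dotv_mulmx_tr !dotvZr.
have -> : dotv u (cross v n) = dotv n n by rewrite /n; coords.
have -> : dotv v (cross n u) = dotv n n by rewrite /n; coords.
have -> : dotv v (cross v n) = 0 by rewrite dotvC dotv_crossl.
have -> : dotv u (cross n u) = 0 by rewrite dotvC dotv_crossr.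
rewrite !mulr0 mulVf //.
have zero1 : (0%:M : 'M[R]_1) = 0 by apply/matrixP => i j; rewrite !mxE mul0rn.
by rewrite zero1 -scalar_mx_block.
Qed.

Lemma rank_col_mx_scale (a b : R) (m : vec) : (\rank (col_mx (a *: m) (b *: m)) <= 1)%N.
Proof.
have -> : col_mx (a *: m) (b *: m) = col_mx (a%:M : 'M_1) (b%:M : 'M_1) *m m.
  by rewrite mul_col_mx !mul_scalar_mx.
exact: leq_trans (mxrankM_maxr _ _) (rank_leq_row _).
Qed.

End VectorAlgebra.

Section SupportRotation.
Variables (R : realType) (I : finType).
Local Notation vec := 'rV[R]_3.

(* Rotate the functional [a] towards [c] until it first vanishes at a new point. *)
Lemma rotate_support (P : pred I) (g : I -> vec) (a c : vec) :
  (forall i, P i -> dotv (g i) a <= 0) ->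
  (forall i, P i -> dotv (g i) a = 0 -> dotv (g i) c <= 0) ->
  (exists2 i, P i & 0 < dotv (g i) c) ->
  exists s : R, [/\ 0 < s, s < 1,
    forall i, P i -> dotv (g i) ((1 - s) *: a + s *: c) <= 0 &
    exists i, [/\ P i, dotv (g i) a < 0 & dotv (g i) ((1 - s) *: a + s *: c) = 0]].
Proof.
move=> a_le0 c_le0 [i0 Pi0 ci0].
pose T i := P i && (0 < dotv (g i) c).
pose F i := dotv (g i) a / (dotv (g i) a - dotv (g i) c).
have Ta i : T i -> dotv (g i) a < 0.
  case/andP=> Pi ci; rewrite lt_neqAle a_le0 // andbT.
  by apply: contraTneq ci => /(c_le0 i Pi) ci_le0; rewrite -leNgt.
have TF i : T i -> F i * (dotv (g i) a - dotv (g i) c) = dotv (g i) a.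
  move=> Ti; rewrite divfK //; have := Ta i Ti; case/andP: Ti => _ ci ai.
  by apply: ltr0_neq0; lra.
have lin j s :
    dotv (g j) ((1 - s) *: a + s *: c) = (1 - s) * dotv (g j) a + s * dotv (g j) c.
  by rewrite dotvDr !dotvZr.
have Ti0 : T i0 by rewrite /T Pi0 ci0.
case: (arg_minP F Ti0) => i Ti Fmin.
have ai := Ta i Ti; have Fi := TF i Ti; case/andP: Ti => Pi ci.
have F_gt0 : 0 < F i by nra.
have F_lt1 : F i < 1 by nra.
exists (F i); split => //.
- move=> j Pj; rewrite lin; have aj := a_le0 j Pj.
  case: (lerP (dotv (g j) c) 0) => cj; first by nra.
  have Tj : T j by rewrite /T Pj cj.
  have := Fmin j Tj; have := TF j Tj; have := Ta j Tj; nra.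
- by exists i; split => //; rewrite lin; nra.
Qed.

Lemma dominate_nonpos (be ga : I -> R) : (forall j, be j <= 0) ->
  exists lam : R, forall j, be j != 0 -> ga j + lam * be j < 0.
Proof.
move=> be_le0; exists (1 + \sum_i `|ga i| / `|be i|) => j be_neq0.
have be_lt0 : be j < 0 by rewrite lt_neqAle be_neq0 be_le0.
have le_sum : `|ga j| / `|be j| <= \sum_i `|ga i| / `|be i|.
  by rewrite (bigD1 j) //= lerDl sumr_ge0 // => i _; rewrite divr_ge0.
have e : `|ga j| / `|be j| * `|be j| = `|ga j| by rewrite divfK // normr_eq0.
have := ler_norm (ga j); move: le_sum e; set Q := _ / _; set S := \sum_i _.
rewrite ltr0_norm //; nra.
Qed.

End SupportRotation.

Section AffineMaps.
Variable R : realType.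
Local Notation vec := 'rV[R]_3.
Implicit Types (M N : 'M[R]_3) (b c u v : vec).

Lemma affine_eq_dir M N b c u v : u *m M + b = u *m N + c ->
  (v *m M + b = v *m N + c) <-> ((v - u) *m M = (v - u) *m N).
Proof.
have shift (W : 'M[R]_3) (d : vec) : (v - u) *m W = (v *m W + d) - (u *m W + d).
  by rewrite mulmxBl opprD addrACA subrr addr0.
move=> eu; split => [ev|e]; first by rewrite (shift M b) (shift N c) ev eu.
move/eqP: e; rewrite !mulmxBl subr_eq => /eqP ->.
by rewrite -addrA eu addrA subrK.
Qed.

Lemma affine_eq_of_basis M N b c (u0 u1 u2 u3 v : vec) :
  det3 (u1 - u0) (u2 - u0) (u3 - u0) != 0 ->
  u0 *m M + b = u0 *m N + c -> u1 *m M + b = u1 *m N + c ->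
  u2 *m M + b = u2 *m N + c -> u3 *m M + b = u3 *m N + c ->
  v *m M + b = v *m N + c.
Proof.
move=> D_neq0 e0 e1 e2 e3; apply/(affine_eq_dir _ e0).
rewrite (cramer_coord (v - u0) D_neq0) !mulmxDl -!scalemxAl.
have [d1 d2 d3] := And3 ((affine_eq_dir _ e0).1 e1) ((affine_eq_dir _ e0).1 e2)
                         ((affine_eq_dir _ e0).1 e3).
by rewrite d1 d2 d3.
Qed.

Lemma unitmx_of_spanning_image (I J : finType) (p : I -> vec) (q : J -> vec)
    (f : I -> J) M b :
  (forall j, exists i, f i = j) -> (forall i, q (f i) = p i *m M + b) ->
  (exists j0 j1 j2 j3,
     \rank (col_mx (q j1 - q j0) (col_mx (q j2 - q j0) (q j3 - q j0))) = 3%N) ->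
  M \in unitmx.
Proof.
move=> f_onto qE [j0 [j1 [j2 [j3]]]].
have [i0 <-] := f_onto j0; have [i1 <-] := f_onto j1.
have [i2 <-] := f_onto j2; have [i3 <-] := f_onto j3.
have dE i i' : (p i *m M + b) - (p i' *m M + b) = (p i - p i') *m M.
  by rewrite mulmxBl opprD addrACA subrr addr0.
rewrite !qE !dE -!mul_col_mx => rk.
have : (3 <= \rank M)%N by rewrite -{1}rk mxrankM_maxr.
by rewrite -row_free_unit /row_free eqn_leq rank_leq_row.
Qed.

(* The rows of the result come from the dual basis [cross b c, cross c a, cross a b]. *)
Lemma linear_map_of_basis (a b c a' b' c' : vec) : det3 a b c != 0 ->
  exists M : 'M[R]_3, [/\ a *m M = a', b *m M = b' & c *m M = c'].
Proof.
set D := det3 a b c => D_neq0.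
set N := (cross b c)^T *m a' + (cross c a)^T *m b' + (cross a b)^T *m c'.
have NE w : w *m (D^-1 *: N) = D^-1 *:
    (dotv w (cross b c) *: a' + dotv w (cross c a) *: b' + dotv w (cross a b) *: c').
  by rewrite -scalemxAr !mulmxDr !mulmxA !dotv_mulmx_tr !mul_scalar_mx.
have cross_l u w : dotv u (cross u w) = 0 by rewrite dotvC dotv_crossl.
have cross_r u w : dotv u (cross w u) = 0 by rewrite dotvC dotv_crossr.
have Db : dotv b (cross c a) = D by rewrite -/(det3 b c a) det3_cyc.
have Dc : dotv c (cross a b) = D by rewrite -/(det3 c a b) -det3_cyc.
exists (D^-1 *: N); rewrite !NE Db Dc -/D !cross_l !cross_r !scale0r.
by rewrite !(addr0, add0r) !scalerA mulVf ?scale1r.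
Qed.

End AffineMaps.

Section Geometry.
Variables (R : realType) (V : finType) (p : V -> 'rV[R]_3).
Local Notation vec := 'rV[R]_3.
Local Notation dir x j := (p j - p x).
Implicit Types (x y z i j k l : V) (a b c m n u : vec).

Definition supports x b := forall j, dotv (dir x j) b <= 0.

Definition edge_support x y b :=
  [/\ y != x, b != 0, supports x b &
      forall j, (dotv (dir x j) b == 0) = (j \in [set x; y])].

(* [be] is obtained by rotating the support [b] of the edge [x y] about that
   edge until it meets a further vertex. *)
Definition rotated_support x y b be :=
  [/\ be != 0, supports x be, dotv (dir x y) be = 0 &
      exists2 j, dotv (dir x j) b < 0 & dotv (dir x j) be = 0].

Definition supports_through x b k l :=
  [/\ b != 0, supports x b, dotv (dir x k) b = 0 & dotv (dir x l) b = 0].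

Definition neighbours3 x ya yb yc :=
  [/\ ya != yb, ya != yc, yb != yc &
      forall j, is_edge p [set x; j] <-> j = ya \/ j = yb \/ j = yc].

Lemma dotv_dirxx x b : dotv (dir x x) b = 0.
Proof. by rewrite subrr dotv0l. Qed.

Lemma face_setP S x : face_set p S -> x \in S ->
  exists a, [/\ a != 0, supports x a & forall j, (j \in S) = (dotv (dir x j) a == 0)].
Proof.
case=> a [c [a_neq0 [a_le ->]]]; rewrite inE => /eqP ax.
exists a; split=> // j; first by rewrite dotvBl ax subr_le0.
by rewrite inE dotvBl ax subr_eq0.
Qed.

Lemma face_set_support x a : a != 0 -> supports x a ->
  face_set p [set j | dotv (dir x j) a == 0].
Proof.
move=> a_neq0 a_le; exists a, (dotv (p x) a); split=> //; split=> [j|].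
- by have := a_le j; rewrite dotvBl subr_le0.
- by apply/setP => j; rewrite !inE dotvBl subr_eq0.
Qed.

Lemma face_through x b k l : supports_through x b k l ->
  cross (dir x k) (dir x l) != 0 -> exists F, [/\ is_face p F, x \in F, k \in F & l \in F].
Proof.
case=> b_neq0 b_le bk bl kl_indep.
exists [set j | dotv (dir x j) b == 0]; rewrite !inE dotv_dirxx bk bl eqxx.
split=> //; split; first exact: face_set_support.
by exists x, k, l; rewrite !inE dotv_dirxx bk bl eqxx rank_cross_neq0.
Qed.

Lemma face_dir_coplanar F x k l j : is_face p F ->
  x \in F -> k \in F -> l \in F -> j \in F -> cross (dir x k) (dir x l) != 0 ->
  exists s t : R, dir x j = s *: dir x k + t *: dir x l.
Proof.
move=> [faceF _] xF kF lF jF; set n := cross _ _ => n_neq0.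
have [a [a_neq0 _ Fa]] := face_setP faceF xF.
have an : a = (dotv n a / dotv n n) *: n.
  apply: cross0_collinear => //; rewrite cross_crossl.
  by move: kF lF; rewrite !Fa => /eqP-> /eqP->; rewrite !scale0r subrr.
have jn : dotv (dir x j) n = 0.
  move: jF; rewrite Fa an dotvZr mulf_eq0 => /orP[|/eqP//].
  by rewrite mulf_eq0 invr_eq0 dotvv_eq0 (negbTE n_neq0) orbF => /eqP na0;
    move: a_neq0; rewrite an na0 mul0r scale0r eqxx.
have D_neq0 : det3 (dir x k) (dir x l) n != 0.
  by rewrite -dotv_cross_det3 dotvv_eq0.
rewrite {1}(cramer_coord (dir x j) D_neq0).
have -> : det3 (dir x k) (dir x l) (dir x j) = 0 by rewrite -dotv_cross_det3 dotvC jn.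
by rewrite mul0r scale0r addr0; do 2 eexists.
Qed.

Lemma dir_span_of_rank :
  (exists i j k l, \rank (col_mx (p j - p i) (col_mx (p k - p i) (p l - p i))) = 3%N) ->
  forall x b, (forall j, dotv (dir x j) b = 0) -> b = 0.
Proof.
move=> [i [j [k [l rk]]]] x b b0.
have bi y : dotv (p y - p i) b = 0.
  have -> : p y - p i = dir x y - dir x i by rewrite opprB addrA subrK.
  by rewrite dotvBl !b0 subrr.
have zero1 : (0%:M : 'M[R]_1) = 0 by apply/matrixP => ? ?; rewrite !mxE mul0rn.
set A := col_mx _ _ in rk.
have bA : b *m A^T = 0.
  by rewrite /A !tr_col_mx !mul_mx_row !dotv_mulmx_tr !(dotvC b) !bi zero1 !row_mx0.
have A_free : row_free A^T by rewrite /row_free mxrank_tr rk.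
by apply/eqP; rewrite -(mulmx_free_eq0 _ A_free) bA.
Qed.

Section Vertices.
Hypothesis p_inj : injective p.
Hypothesis vertex_exposed : forall i, face_set p [set i].
Hypothesis dir_span : forall x b, (forall j, dotv (dir x j) b = 0) -> b = 0.

Lemma dir_eq0 x j : (dir x j == 0) = (j == x).
Proof. by rewrite subr_eq0 (inj_eq p_inj). Qed.

Lemma exposing x : exists a, forall j, j != x -> dotv (dir x j) a < 0.
Proof.
have [a [_ a_le Sa]] := face_setP (vertex_exposed x) (set11 x).
by exists a => j jx; rewrite lt_neqAle a_le andbT -Sa in_set1.
Qed.

Lemma exists_dotv_dir_neq0 x b : b != 0 -> exists j, dotv (dir x j) b != 0.
Proof.
move=> b_neq0; apply/existsP; apply: contraNT b_neq0 => /existsPn b0.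
apply/eqP; apply: (@dir_span x) => j; apply/eqP.
by have := b0 j; rewrite negbK.
Qed.

Lemma supports_opposite x n kp km : supports x (kp *: n) -> supports x (km *: n) ->
  kp * km < 0 -> n = 0.
Proof.
move=> np nm k_lt0; apply: (@dir_span x) => j.
have := np j; have := nm j; rewrite !dotvZr => hm hp; have prod_ge0 := mulr_le0 hp hm.
by apply/eqP; rewrite -sqrf_eq0 eq_le sqr_ge0 andbT; nra.
Qed.

Lemma separated_supports_tangent x d bp bm u : supports x bp -> supports x bm ->
  dotv d bp = 0 -> dotv d bm = 0 -> 0 < dotv u bp -> dotv u bm < 0 ->
  forall v, dotv v bp = 0 -> dotv v bm = 0 -> cross d v = 0.
Proof.
move=> bp_le bm_le dbp dbm ubp ubm v vbp vbm; apply/eqP; apply: contraT => n_neq0.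
set n := cross d v in n_neq0.
have along be : dotv d be = 0 -> dotv v be = 0 -> exists t : R, be = t *: n.
  move=> dbe vbe; exists (dotv n be / dotv n n); apply: cross0_collinear => //.
  by rewrite cross_crossl dbe vbe !scale0r subrr.
have [kp ep] := along _ dbp vbp; have [km em] := along _ dbm vbm.
have k_lt0 : kp * km < 0.
  move: ubp ubm; rewrite ep em !dotvZr => ubp ubm.
  have : kp * km * dotv u n ^+ 2 < 0 by rewrite expr2 mulrACA pmulr_rlt0.
  by have := sqr_ge0 (dotv u n); nra.
have n0 : n = 0 by apply: (supports_opposite _ _ k_lt0); [rewrite -ep | rewrite -em].
by rewrite n0 eqxx in n_neq0.
Qed.

(* Adding a large multiple of [be] to [ga] keeps [ga] where [be] vanishes and is
   negative elsewhere. *)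
Lemma support_refine x be ga : supports x be ->
  (forall j, dotv (dir x j) be = 0 -> dotv (dir x j) ga <= 0) ->
  exists G, supports x G /\ forall j,
    dotv (dir x j) G = 0 <-> dotv (dir x j) be = 0 /\ dotv (dir x j) ga = 0.
Proof.
move=> be_le ga_le.
have [lam lam_lt] := @dominate_nonpos _ _ (fun j => dotv (dir x j) be)
                                         (fun j => dotv (dir x j) ga) be_le.
exists (ga + lam *: be); split=> j; rewrite dotvDr dotvZr;
  have [be0|be_neq0] := eqVneq (dotv (dir x j) be) 0.
- by rewrite be0 mulr0 addr0 ga_le.
- exact/ltW/lam_lt.
- by rewrite be0 mulr0 addr0; split=> [->|[]].
- have lt0 := lam_lt j be_neq0.
  by split=> [e|[e]]; [rewrite e ltxx in lt0 | rewrite e eqxx in be_neq0].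
Qed.

Lemma vertex_not_between x k l t : k != x -> l != k ->
  dir x k = t *: dir x l -> 0 < t < 1 -> False.
Proof.
move=> kx lk e /andP[t_gt0 t_lt1]; have [a a_lt0] := exposing k.
have := a_lt0 x; have := a_lt0 l lk; rewrite eq_sym kx => akl /(_ isT) akx.
have := congr1 (fun v => dotv v a) e.
have -> : dir x l = dir k l - dir k x by rewrite opprB addrA subrK.
by rewrite -opprB /= dotvNl dotvZl dotvBl; nra.
Qed.

Lemma dir_pscale_inj x i j t : i != x -> 0 < t -> dir x i = t *: dir x j -> i = j.
Proof.
move=> ix t_gt0 e; apply/eqP; apply: contraT => ij.
have jx : j != x.
  by apply: contraNneq ix => jx; rewrite -dir_eq0 e jx subrr scaler0.
case: (ltrgtP t 1) => [t_lt1|t_gt1|t1].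
- by case: (vertex_not_between ix _ e); rewrite ?t_gt0 // eq_sym.
- case: (vertex_not_between jx ij (t := t^-1)).
    by rewrite e scalerA mulVf ?scale1r ?gt_eqF.
  by rewrite invr_gt0 t_gt0 invf_lt1.
- by move: e; rewrite t1 scale1r => /addIr/p_inj ij'; rewrite ij' eqxx in ij.
Qed.

Lemma edge_of_support_line x y G m : G != 0 -> supports x G -> y != x ->
  dotv (dir x y) G = 0 -> (forall j, dotv (dir x j) G = 0 -> exists t, dir x j = t *: m) ->
  is_edge p [set x; y].
Proof.
move=> G_neq0 G_le yx Gy on_line.
have contact : [set j | dotv (dir x j) G == 0] = [set x; y].
  apply/setP => i; rewrite !inE; apply/eqP/orP => [Gi|[]/eqP->]; last 2 first.
  - exact: dotv_dirxx.
  - exact: Gy.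
  have [->|ix] := eqVneq i x; [by left | right; apply/eqP].
  have [a a_lt0] := exposing x.
  have [t ti] := on_line i Gi; have [t1 ty] := on_line y Gy.
  have := a_lt0 i ix; have := a_lt0 y yx; rewrite ti ty !dotvZl => ya ia.
  have t1_neq0 : t1 != 0 by apply: contraTneq ya => ->; rewrite mul0r ltxx.
  apply: (dir_pscale_inj ix (t := t / t1)); last by rewrite ti ty scalerA divfK.
  by have := divfK t1_neq0 t; set r := t / t1; nra.
split; last by rewrite cards2 eq_sym yx.
by rewrite -contact; apply: face_set_support.
Qed.

Lemma edge_neq x y : is_edge p [set x; y] -> y != x.
Proof. by case=> _; rewrite cards2 eq_sym; case: (y != x). Qed.

Lemma edge_support_end x y b : edge_support x y b -> dotv (dir x y) b = 0.
Proof. by case=> _ _ _ Sb; apply/eqP; rewrite Sb set22. Qed.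

Lemma edge_supportP x y : is_edge p [set x; y] -> exists b, edge_support x y b.
Proof.
move=> exy; case: (exy) => face2 _.
have [b [b_neq0 b_le Sb]] := face_setP face2 (set21 x y).
by exists b; split=> //; exact: edge_neq.
Qed.

Lemma edge_cross_neq0 x y z : is_edge p [set x; y] -> is_edge p [set x; z] -> z != y ->
  cross (dir x y) (dir x z) != 0.
Proof.
move=> /edge_supportP[b eb] /edge_neq zx zy; case: (eb) => yx _ _ Sb.
apply/eqP => /cross0_collinear; rewrite dir_eq0 => /(_ yx) e.
have /eqP : dotv (dir x z) b = 0 by rewrite e dotvZl (edge_support_end eb) mulr0.
by rewrite Sb in_set2 (negbTE zx) (negbTE zy).
Qed.

Lemma rotate_about_edge x y b u mu : edge_support x y b -> u != 0 -> mu != 0 ->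
  dotv (dir x y) u = 0 -> dotv b u = 0 ->
  (exists j, 0 < dotv (dir x j) (mu *: u - b)) ->
  exists2 s : R, 0 < s & rotated_support x y b ((1 - 2 * s) *: b + (s * mu) *: u).
Proof.
move=> eb; have yb := edge_support_end eb; case: eb => yx b_neq0 b_le Sb.
move=> u_neq0 mu_neq0 yu bu [j0 j0_gt0].
have comb s : (1 - s) *: b + s *: (mu *: u - b) = (1 - 2 * s) *: b + (s * mu) *: u.
  by apply: row3P; rewrite !mxE; ring.
have contact j : dotv (dir x j) b = 0 -> dotv (dir x j) (mu *: u - b) <= 0.
  move/eqP; rewrite Sb in_set2 => /orP[]/eqP->; first by rewrite dotv_dirxx.
  by rewrite dotvDr dotvNr dotvZr yu yb mulr0 oppr0 addr0.
have [s [s_gt0 _ s_le [j [_ bj sj]]]] :=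
  rotate_support (P := predT) (g := fun j => dir x j) (fun j _ => b_le j)
    (fun j _ => contact j) (ex_intro2 _ _ j0 isT j0_gt0).
exists s => //; split.
- apply/eqP => be0; have := congr1 (dotv u) be0.
  rewrite dotvDr !dotvZr (dotvC u b) bu mulr0 add0r dotv0r => /eqP.
  by rewrite !mulf_eq0 (gt_eqF s_gt0) (negbTE mu_neq0) dotvv_eq0 (negbTE u_neq0).
- by move=> i; rewrite -comb; exact: s_le.
- by rewrite dotvDr !dotvZr yb yu !mulr0 addr0.
- by exists j; rewrite // -comb.
Qed.

(* [bp] and [bm] come from rotating [b] about the edge in opposite senses. *)
Lemma edge_two_rotations x y b : edge_support x y b ->
  exists bp bm, [/\ rotated_support x y b bp, rotated_support x y b bm &
    forall v, dotv v bp = 0 -> dotv v bm = 0 -> cross (dir x y) v = 0].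
Proof.
move=> eb; have db := edge_support_end eb; case: (eb) => yx b_neq0 b_le _.
set d := dir x y in db *; have d_neq0 : d != 0 by rewrite dir_eq0.
set u := cross d b.
have du : dotv d u = 0 by rewrite dotvC dotv_crossl.
have bu : dotv b u = 0 by rewrite dotvC dotv_crossr.
have u_neq0 : u != 0.
  by apply: contraNneq b_neq0 => /(cross0_collinear d_neq0) ->; rewrite db mul0r scale0r.
have [j0 bj0] : exists j, dotv (dir x j) b < 0.
  by have [j bj] := exists_dotv_dir_neq0 x b_neq0; exists j; rewrite lt_neqAle bj b_le.
set U := dotv (dir x j0) u.
have U1_gt0 : 0 < `|U| + 1 by have := normr_ge0 U; lra.
set lam := - dotv (dir x j0) b / (`|U| + 1).
have lamE : lam * `|U| + lam = - dotv (dir x j0) b.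
  by rewrite -[X in _ + X]mulr1 -mulrDr divfK ?gt_eqF.
have lam_gt0 : 0 < lam by rewrite divr_gt0 // oppr_gt0.
have tilt mu : `|mu| <= lam -> exists j, 0 < dotv (dir x j) (mu *: u - b).
  move=> mu_le; exists j0; rewrite dotvDr dotvNr dotvZr -/U.
  have := ler_wpM2r (normr_ge0 U) mu_le; have := ler_norm (- (mu * U)).
  rewrite normrN normrM; nra.
have lam_le : `|lam| <= lam by rewrite ger0_norm // ltW.
have Nlam_le : `|- lam| <= lam by rewrite normrN.
have Nlam_neq0 : - lam != 0 by rewrite oppr_eq0 lt0r_neq0.
have [sp sp_gt0 rp] := rotate_about_edge eb u_neq0 (lt0r_neq0 lam_gt0) du bu (tilt _ lam_le).
have [sm sm_gt0 rm] := rotate_about_edge eb u_neq0 Nlam_neq0 du bu (tilt _ Nlam_le).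
exists ((1 - 2 * sp) *: b + (sp * lam) *: u), ((1 - 2 * sm) *: b + (sm * - lam) *: u).
split=> //; case: rp rm => _ bp_le dbp _ [_ bm_le dbm _].
have u_comb s mu : dotv u ((1 - 2 * s) *: b + (s * mu) *: u) = s * mu * dotv u u.
  by rewrite dotvDr !dotvZr (dotvC u b) bu mulr0 add0r.
have uu_gt0 : 0 < dotv u u by rewrite dotvv_gt0.
apply: (separated_supports_tangent (u := u) bp_le bm_le dbp dbm); rewrite u_comb.
- by apply: mulr_gt0 => //; exact: mulr_gt0.
- by rewrite mulrN mulNr oppr_lt0; apply: mulr_gt0 => //; exact: mulr_gt0.
Qed.

Lemma rotated_support_edge x y b be : edge_support x y b -> rotated_support x y b be ->
  exists j, [/\ j != y, is_edge p [set x; j] & dotv (dir x j) be = 0].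
Proof.
move=> eb [be_neq0 be_le bey [jw bjw bejw]].
have yb := edge_support_end eb; case: eb => yx _ _ _.
have [a a_lt0] := exposing x.
have a_le j : dotv (dir x j) a <= 0.
  by have [->|/a_lt0/ltW//] := eqVneq j x; rewrite dotv_dirxx.
have a0 j : dotv (dir x j) a = 0 -> dotv (dir x j) (- b) <= 0.
  have [-> _|jx aj0] := eqVneq j x; first by rewrite dotv_dirxx.
  by have := a_lt0 j jx; rewrite aj0 ltxx.
have bjw' : 0 < dotv (dir x jw) (- b) by rewrite dotvNr oppr_gt0.
have [s [s_gt0 s_lt1 ga_le [j [/eqP bej aj gaj]]]] :=
  rotate_support (P := fun j => dotv (dir x j) be == 0) (g := fun j => dir x j)
    (fun j _ => a_le j) (fun j _ => a0 j) (ex_intro2 _ _ jw (introT eqP bejw) bjw').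
set ga := (1 - s) *: a + s *: - b in ga_le gaj.
have gay : dotv (dir x y) ga < 0.
  by rewrite dotvDr !dotvZr dotvNr yb oppr0 mulr0 addr0 pmulr_rlt0 ?subr_gt0 ?a_lt0.
have [G [G_le G0]] := support_refine be_le (fun j bej => ga_le j (introT eqP bej)).
have G_neq0 : G != 0.
  apply/eqP => G_eq0; have [|_ gay0] := (G0 y).1; first by rewrite G_eq0 dotv0r.
  by rewrite gay0 ltxx in gay.
have jx : j != x by apply: contraTneq aj => ->; rewrite dotv_dirxx ltxx.
exists j; split=> //; first by apply: contraTneq gay => <-; rewrite gaj ltxx.
apply: (edge_of_support_line G_neq0 G_le jx ((G0 j).2 (conj bej gaj)) (m := cross be ga)).
move=> i /G0[bei gai]; exists (dotv (cross be ga) (dir x i) / dotv (cross be ga) (cross be ga)).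
apply: cross0_collinear.
  by apply: contraTneq gay => /(cross0_collinear be_neq0) ->; rewrite dotvZr bey mulr0 ltxx.
by rewrite cross_crossl (dotvC be) (dotvC ga) bei gai !scale0r subrr.
Qed.

Lemma edge_in_face x y : is_edge p [set x; y] -> exists F, [/\ is_face p F, x \in F & y \in F].
Proof.
move=> exy; have [b eb] := edge_supportP exy; case: (eb) => yx _ _ _.
have [bp [_ [[bp_neq0 bp_le bpy [j bj bpj]] _ _]]] := edge_two_rotations eb.
have indep : cross (dir x y) (dir x j) != 0.
  have dy_neq0 : dir x y != 0 by rewrite dir_eq0.
  apply/eqP => /(cross0_collinear dy_neq0) ej.
  by move: bj; rewrite ej dotvZl (edge_support_end eb) mulr0 ltxx.
have [F [faceF xF yF _]] := @face_through x bp y j (And4 bp_neq0 bp_le bpy bpj) indep.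
by exists F.
Qed.

Lemma vertex_in_face v : exists F, is_face p F /\ v \in F.
Proof.
have [a [a_neq0 a_le Sa]] := face_setP (vertex_exposed v) (set11 v).
have a0 j : dotv (dir v j) a = 0 -> j = v by move/eqP; rewrite -Sa in_set1 => /eqP.
have [u0 u0_neq0 au0] := orthogonal_neq0 a_neq0.
have [j1 j1u0] := exists_dotv_dir_neq0 v u0_neq0.
set u := dotv (dir v j1) u0 *: u0.
have j1u : 0 < dotv (dir v j1) u by rewrite dotvZr -expr2 lt0r sqr_ge0 sqrf_eq0 j1u0.
have u0_le j : dotv (dir v j) a = 0 -> dotv (dir v j) u <= 0.
  by move/a0 ->; rewrite dotv_dirxx.
have [s [s_gt0 s_lt1 be_le [j [_ aj bej]]]] :=
  rotate_support (P := predT) (g := fun j => dir v j) (fun j _ => a_le j)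
    (fun j _ => u0_le j) (ex_intro2 _ _ j1 isT j1u).
set be := (1 - s) *: a + s *: u in be_le bej.
have be_sup : supports v be := fun i => be_le i isT.
have jv : j != v by apply: contraTneq aj => ->; rewrite dotv_dirxx ltxx.
have be_neq0 : be != 0.
  apply/eqP => be0; have := congr1 (dotv a) be0.
  rewrite dotvDr !dotvZr au0 !mulr0 addr0 dotv0r => /eqP.
  by rewrite mulf_eq0 subr_eq0 (gt_eqF s_lt1) dotvv_eq0 (negbTE a_neq0).
have dj_neq0 : dir v j != 0 by rewrite dir_eq0.
case: (pickP (fun k => (dotv (dir v k) be == 0) && (cross (dir v j) (dir v k) != 0))).
  move=> k /andP[/eqP bek indep].
  have [F [faceF vF _ _]] := @face_through v be j k (And4 be_neq0 be_sup bej bek) indep.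
  by exists F.
move=> collinear.
have evj : is_edge p [set v; j].
  apply: (edge_of_support_line be_neq0 be_sup jv bej (m := dir v j)) => k bek.
  move: (collinear k); rewrite bek eqxx /= => /negbFE/eqP/(cross0_collinear dj_neq0) ->.
  by eexists.
by have [F [faceF vF _]] := edge_in_face evj; exists F.
Qed.

Lemma neighbours3_rot x ya yb yc : neighbours3 x ya yb yc -> neighbours3 x yb yc ya.
Proof.
case=> ab ac bc nbr; split; rewrite 1?[_ == ya]eq_sym // => j.
by rewrite nbr; tauto.
Qed.

Lemma neighbours3_frame x ya yb yc : neighbours3 x ya yb yc ->
  [/\ det3 (dir x ya) (dir x yb) (dir x yc) != 0,
      exists b, supports_through x b ya yb & exists b, supports_through x b ya yc].
Proof.
case=> ab ac bc nbr.
have ea : is_edge p [set x; ya] by apply/nbr; left.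
have [b eb] := edge_supportP ea.
have [bp [bm [rp rm tangent]]] := edge_two_rotations eb.
have [jp [jpa ejp bpjp]] := rotated_support_edge eb rp.
have [jm [jma ejm bmjm]] := rotated_support_edge eb rm.
case: rp rm => bp_neq0 bp_le bpa _ [bm_neq0 bm_le bma _].
have jmp : jm != jp.
  apply: contraTneq (edge_cross_neq0 ea ejm jma) => jmp.
  by rewrite negbK; apply/eqP; apply: tangent => //; rewrite jmp.
have D_neq0 : det3 (dir x ya) (dir x jp) (dir x jm) != 0.
  apply/eqP => D0.
  have [t bpE] : exists t : R, bp = t *: cross (dir x ya) (dir x jp).
    eexists; apply: cross0_collinear (edge_cross_neq0 ea ejp jpa) _.
    by rewrite cross_crossl bpa bpjp !scale0r subrr.
  have bpjm : dotv (dir x jm) bp = 0.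
    by rewrite bpE dotvZr dotvC dotv_cross_det3 D0 mulr0.
  by move/eqP: (edge_cross_neq0 ea ejm jma); apply; apply: tangent.
have other j : is_edge p [set x; j] -> j != ya -> j = yb \/ j = yc.
  by move=> /nbr[->|//]; rewrite eqxx.
have /orP[/andP[/eqP jpE /eqP jmE]|/andP[/eqP jpE /eqP jmE]] :
    (jp == yb) && (jm == yc) || (jp == yc) && (jm == yb).
  by case: (other _ ejp jpa) (other _ ejm jma) jmp => [->|->] [->|->];
    rewrite ?eqxx //= ?orbT.
- subst jp jm; split=> //.
  + by exists bp.
  + by exists bm.
- subst jp jm; split.
  + by move: D_neq0; rewrite det3_swap oppr_eq0.
  + by exists bm.
  + by exists bp.
Qed.

Lemma neighbours3_face x ya yb yc : neighbours3 x ya yb yc ->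
  exists F, [/\ is_face p F, x \in F, ya \in F & yb \in F].
Proof.
move=> nbr; have [_ [b bab] _] := neighbours3_frame nbr.
case: nbr => ab _ _ edges; apply: face_through bab _.
by apply: edge_cross_neq0; rewrite 1?eq_sym //; apply/edges; tauto.
Qed.

(* Every contact direction lies in the cone spanned by the three edges, so a face
   through [x] that missed two neighbours would lie on the line of the third. *)
Lemma neighbours3_face_meets x ya yb yc F : neighbours3 x ya yb yc ->
  is_face p F -> x \in F -> yb \in F \/ yc \in F.
Proof.
move=> nbr faceF xF.
have [D_neq0 [bab [ab_neq0 ab_le ab_a ab_b]] [bac [ac_neq0 ac_le ac_a ac_c]]] :=
  neighbours3_frame nbr.
have [_ [bbc [bc_neq0 bc_le bc_b bc_c]] _] := neighbours3_frame (neighbours3_rot nbr).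
set da := dir x ya; set db := dir x yb; set dc := dir x yc; set D := det3 da db dc.
have [n [n_neq0 n_le Fn]] := face_setP faceF.1 xF.
apply/orP; apply: contraT; rewrite negb_or => /andP[ybF ycF].
have nb : dotv db n < 0 by rewrite lt_neqAle n_le andbT -Fn.
have nc : dotv dc n < 0 by rewrite lt_neqAle n_le andbT -Fn.
have line z : z \in F -> dir x z = (det3 (dir x z) db dc / D) *: da.
  move=> zF; apply: cone_face_collinear (n_le _) nb nc _ => //.
  - exact: det3_same_side D_neq0 bc_neq0 bc_b bc_c (bc_le _) (bc_le _).
  - have := det3_same_side (a := db) (b := dc) (c := da) _ ac_neq0 ac_c ac_a (ac_le _) (ac_le z).
    by rewrite (det3_cyc da (dir x z) dc) (det3_cyc da db dc); apply.
  - have := det3_same_side (a := dc) (b := da) (c := db) _ ab_neq0 ab_a ab_b (ab_le _) (ab_le z).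
    rewrite (det3_cyc db (dir x z) da) (det3_cyc da db (dir x z)).
    by rewrite -(det3_cyc dc da db); apply.
  - by apply/eqP; rewrite -Fn.
case: faceF => _ [i [j [k [iF jF kF rk]]]].
suff : (\rank (col_mx (p j - p i) (p k - p i)) <= 1)%N by rewrite rk.
have dE l : p l - p i = dir x l - dir x i by rewrite opprB addrA subrK.
by rewrite !dE (line i iF) (line j jF) (line k kF) -!scalerBl rank_col_mx_scale.
Qed.

Section Rigidity.
Variables (V' : finType) (q : V' -> vec) (f : V -> V').
Hypothesis face_affine : forall F, is_face p F -> affine_on p q f F.

Definition agrees (M : 'M[R]_3) b j := q (f j) = p j *m M + b.

Definition agrees_around M b x :=
  forall F, is_face p F -> x \in F -> {in F, forall j, agrees M b j}.

Lemma agrees_on_face M b F x k l : is_face p F -> x \in F -> k \in F -> l \in F ->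
  cross (dir x k) (dir x l) != 0 -> agrees M b x -> agrees M b k -> agrees M b l ->
  {in F, forall j, agrees M b j}.
Proof.
move=> faceF xF kF lF kl ax ak al j jF.
have [MF [bF [_ eF]]] := face_affine faceF.
have same i : agrees M b i -> i \in F -> p i *m M + b = p i *m MF + bF.
  by move=> ai iF; rewrite -ai eF.
have ex := same x ax xF.
rewrite /agrees (eF j jF); apply/esym/(affine_eq_dir _ ex).
have [s [t ->]] := face_dir_coplanar faceF xF kF lF jF kl.
rewrite !mulmxDl -!scalemxAl.
by rewrite ((affine_eq_dir _ ex).1 (same k ak kF)) ((affine_eq_dir _ ex).1 (same l al lF)).
Qed.

Lemma agrees_at_neighbours x ya yb yc : neighbours3 x ya yb yc ->
  exists M b, agrees M b x /\ forall y, is_edge p [set x; y] -> agrees M b y.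
Proof.
move=> nbr; have [D_neq0 _ _] := neighbours3_frame nbr.
have [M [Ma Mb Mc]] := linear_map_of_basis (q (f ya) - q (f x)) (q (f yb) - q (f x))
                                          (q (f yc) - q (f x)) D_neq0.
exists M, (q (f x) - p x *m M); split; first by rewrite /agrees addrC subrK.
have shift y : dir x y *m M = q (f y) - q (f x) -> agrees M (q (f x) - p x *m M) y.
  by move=> e; rewrite /agrees addrCA -mulmxBl e addrC subrK.
by case: nbr => _ _ _ nbr y /nbr[->|[->|->]]; apply: shift.
Qed.

Lemma neighbours3_face_pair x ya yb yc F : neighbours3 x ya yb yc ->
  is_face p F -> x \in F -> exists k l,
  [/\ is_edge p [set x; k], is_edge p [set x; l], l != k, k \in F & l \in F].
Proof.
move=> nbr faceF xF; case: (nbr) => ab ac bc edges.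
have ea : is_edge p [set x; ya] by apply/edges; left.
have eb : is_edge p [set x; yb] by apply/edges; right; left.
have ec : is_edge p [set x; yc] by apply/edges; right; right.
have [bF|cF] := neighbours3_face_meets nbr faceF xF.
- have [cF|aF] := neighbours3_face_meets (neighbours3_rot nbr) faceF xF.
  + by exists yb, yc; rewrite eq_sym.
  + by exists ya, yb; rewrite eq_sym.
- have [aF|bF] := neighbours3_face_meets (neighbours3_rot (neighbours3_rot nbr)) faceF xF.
  + by exists ya, yc; rewrite eq_sym.
  + by exists yb, yc; rewrite eq_sym.
Qed.

Lemma agrees_around_of_neighbours M b x ya yb yc : neighbours3 x ya yb yc ->
  agrees M b x -> (forall y, is_edge p [set x; y] -> agrees M b y) -> agrees_around M b x.
Proof.
move=> nbr ax ay F faceF xF.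
have [k [l [ek el lk kF lF]]] := neighbours3_face_pair nbr faceF xF.
exact: agrees_on_face faceF xF kF lF (edge_cross_neq0 ek el lk) ax (ay k ek) (ay l el).
Qed.

(* Both faces at [x] through the edge [x x'] contain [x'], and together they
   contain [x] and its three neighbours, which span. *)
Lemma agrees_around_edge M b x x' : degree3 p x -> degree3 p x' -> is_edge p [set x; x'] ->
  agrees_around M b x -> agrees_around M b x'.
Proof.
move=> [ya [yb [yc nbr]]] [za [zb [zc nbr']]] exx' around.
have [k [l [z [nbrk x'k]]]] : exists k l z, neighbours3 x k l z /\ x' = k.
  case: (nbr) => _ _ _ /(_ x') /proj1 /(_ exx') [->|[->|->]].
  - by exists ya, yb, yc.
  - by exists yb, yc, ya; split=> //; exact: neighbours3_rot.
  - by exists yc, ya, yb; split=> //; do 2 apply: neighbours3_rot.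
subst x'.
have [M' [b' [ak' ay']]] := agrees_at_neighbours nbr'.
have around' := agrees_around_of_neighbours nbr' ak' ay'.
have [F1 [face1 xF1 kF1 lF1]] := neighbours3_face nbrk.
have [F2 [face2 xF2 zF2 kF2]] := neighbours3_face (neighbours3_rot (neighbours3_rot nbrk)).
have agree F j : is_face p F -> x \in F -> k \in F -> j \in F ->
    p j *m M + b = p j *m M' + b'.
  by move=> faceF xF kF jF; rewrite -(around F faceF xF j jF) -(around' F faceF kF j jF).
have [D_neq0 _ _] := neighbours3_frame nbrk.
have same j : p j *m M + b = p j *m M' + b'.
  apply: (affine_eq_of_basis _ D_neq0).
  - exact: (agree _ _ face1 xF1 kF1 xF1).
  - exact: (agree _ _ face1 xF1 kF1 kF1).
  - exact: (agree _ _ face1 xF1 kF1 lF1).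
  - exact: (agree _ _ face2 xF2 kF2 zF2).
by move=> F faceF kF j jF; rewrite /agrees same; exact: around' F faceF kF j jF.
Qed.

Lemma agrees_around_path M b x s : edge_path p x s -> {in x :: s, forall y, degree3 p y} ->
  agrees_around M b x -> {in x :: s, forall y, agrees_around M b y}.
Proof.
elim: s x => [|z s IH] x /=; first by move=> _ _ ax y; rewrite inE => /eqP->.
case=> exz path_z deg ax y; rewrite inE => /predU1P[->//|ys].
have deg_z : {in z :: s, forall y, degree3 p y}.
  by move=> w wz; apply: deg; rewrite inE wz orbT.
apply: (IH z) => //; apply: agrees_around_edge exz ax; apply: deg;
  by rewrite !inE eqxx ?orbT.
Qed.

Lemma agrees_everywhere M b x s : edge_path p x s -> {in x :: s, forall y, degree3 p y} ->
  (forall F, is_face p F -> exists2 y, y \in x :: s & y \in F) ->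
  agrees_around M b x -> forall j, agrees M b j.
Proof.
move=> path deg cover ax j.
have [F [faceF jF]] := vertex_in_face j.
have [y ys yF] := cover F faceF.
exact: agrees_around_path path deg ax y ys F faceF yF j jF.
Qed.

End Rigidity.

End Vertices.
End Geometry.

Unset Implicit Arguments.

Theorem theorem5 (R : realType) (V V' : finType)
  (p : V -> 'rV[R]_3) (q : V' -> 'rV[R]_3) (f : V -> V')
  (x0 : V) (s : seq V) :
  strictly_convex_polyhedron p ->
  strictly_convex_polyhedron q ->
  comb_equiv p q f ->
  (forall F, is_face p F -> affine_on p q f F) ->
  edge_path p x0 s ->
  (forall x, x \in x0 :: s -> degree3 p x) ->
  (forall F, is_face p F -> exists2 x, x \in x0 :: s & x \in F) ->
  affine_on p q f setT.
Proof.
move=> [p_inj exposed p_rank] [_ _ q_rank] [[g _ gK] _ _] face_aff path deg cover.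
have span := dir_span_of_rank p_rank.
have [ya [yb [yc nbr]]] := deg x0 (mem_head x0 s).
have [M [b [ax0 ay]]] := agrees_at_neighbours p_inj exposed span q f nbr.
have around := agrees_around_of_neighbours p_inj exposed span face_aff nbr ax0 ay.
have agree := agrees_everywhere p_inj exposed span face_aff path deg cover around.
exists M, b; split=> [|i _]; last exact: agree.
exact: unitmx_of_spanning_image (fun j => ex_intro _ (g j) (gK j)) agree q_rank.
Qed.
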